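(* The span of $K_n$ (the maximal number of everywhere linearly independent tangent vector fields) is $n$ if $n$ is odd and $n-1$ if $n$ is even. For all $n\ge1$, $K_n$ immerses in $\mathbb{R}^{n+1}$.
   Context: $K_n=(S^1)^n/\bigl((z_1,\ldots,z_{n-1},z_n)\sim(\overline{z}_1,\ldots,\overline{z}_{n-1},-z_n)\bigr)$, where $S^1\subset\mathbb{C}$ is the unit circle and $\overline{z}$ is complex conjugation. *)

From HB Require Import structures.
From mathcomp Require Import all_boot all_order all_algebra.
From mathcomp Require Import all_classical all_reals all_analysis.
Set Implicit Arguments. Unset Strict Implicit. Unset Printing Implicit Defensive.
Import Order.TTheory GRing.Theory Num.Theory.
Import numFieldNormedType.Exports.
Local Open Scope ring_scope.

(* Model of K_n = (S^1)^n / ((z_1,..,z_{n-1},z_n) ~ (conj z_1,..,conj z_{n-1},-z_n)).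
   Writing z_j = exp(i x_j), K_n is the quotient of R^n (row vectors 'rV_n)
   by the group generated by the translations x |-> x + 2 pi e_i and the
   map sigma(x) = (-x_1,..,-x_{n-1}, x_n + pi). *)

Section K.
Variables (R : realType) (n : nat).

Definition is_last (j : 'I_n) : bool := (val j == n.-1)%N.

Definition Ksigma (x : 'rV[R]_n) : 'rV[R]_n :=
  \row_j (if is_last j then x 0 j + pi else - x 0 j).

Definition Kdsigma (v : 'rV[R]_n) : 'rV[R]_n :=
  \row_j (if is_last j then v 0 j else - v 0 j).

Definition Ktrans (i : 'I_n) (x : 'rV[R]_n) : 'rV[R]_n :=
  x + \row_j (if j == i then 2 * pi else 0).

(* a (continuous) tangent vector field on K_n, in the global angular
   trivialisation of the tangent bundle of the torus: a continuous map
   R^n -> R^n invariant under the deck group *)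
Definition Kvector_field (v : 'rV[R]_n -> 'rV[R]_n) : Prop :=
  continuous v /\
  (forall i x, v (Ktrans i x) = v x) /\
  (forall x, v (Ksigma x) = Kdsigma (v x)).

Definition K_has_indep_fields (k : nat) : Prop :=
  exists V : 'I_k -> 'rV[R]_n -> 'rV[R]_n,
    (forall i, Kvector_field (V i)) /\
    (forall x, row_free (\matrix_(i < k, j < n) V i x 0 j)).

Definition K_span_is (s : nat) : Prop :=
  K_has_indep_fields s /\ (forall k, K_has_indep_fields k -> (k <= s)%N).

Fixpoint Ck (m : nat) (k : nat) (f : 'rV[R]_n -> 'rV[R]_m) : Prop :=
  match k with
  | 0%N => continuous f
  | k'.+1 => (forall x, differentiable f x) /\
             (forall i : 'I_n, Ck k' (fun x => derive f x (delta_mx 0 i)))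
  end.

Definition smooth (m : nat) (f : 'rV[R]_n -> 'rV[R]_m) : Prop :=
  forall k, Ck k f.

(* a smooth immersion K_n -> R^m, as a deck-invariant smooth map on the
   universal cover R^n whose differential is injective everywhere *)
Definition K_immerses_in (m : nat) : Prop :=
  exists f : 'rV[R]_n -> 'rV[R]_m,
    smooth f /\
    (forall i x, f (Ktrans i x) = f x) /\
    (forall x, f (Ksigma x) = f x) /\
    (forall x v, 'd f x v = 0 -> v = 0).

End K.

From HB Require Import structures.
From mathcomp Require Import all_boot all_order all_algebra.
From mathcomp Require Import all_classical all_reals all_analysis.
From mathcomp Require Import ring lra zify.
Set Implicit Arguments. Unset Strict Implicit. Unset Printing Implicit Defensive.
Import Order.TTheory GRing.Theory Num.Theory.
Import numFieldNormedType.Exports.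
Local Open Scope ring_scope.

(* All maps below are trigonometric polynomials in the angles,
   so smoothness and derivatives can be computed formally.

   Fields: e_(n-1) together with the pairs (e_(2q), e_(2q+1)) of the first
   n - 1 coordinates rotated by the angle x_(n-1).  Ksigma turns these
   rotations by pi, i.e. negates them, exactly as its differential
   diag(-1, ..., -1, 1) does; this gives n fields for n odd and n - 1 for n
   even.  For n even there is no n-th field: Ksigma reverses orientation, so
   the determinant of n fields changes sign between 0 and Ksigma 0.

   Immersion: the torus of the first n - 1 angles immerses in R^n by iterated
   tubes around a circle (n odd) or a figure eight (n even), and negating
   these angles acts on the image by the reflection fixing the first axis,
   resp. by -1.  Rotating the negated components pairwise by x_(n-1), and
   using the first rotated component as the radius of a circle run through at
   the angle 2 x_(n-1), gives a Ksigma-invariant immersion into R^(n+1). *)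

(** * Trigonometric polynomials in the coordinates *)

Section Coordinates.
Variables (R : realType) (n : nat).
Implicit Types (x v : 'rV[R]_n).

(* Coordinates indexed by [nat], with junk value [0] past [n]. *)
Definition coordn (i : nat) x : R := if insub i is Some j then x 0 j else 0.

Lemma coordn_ord x (j : 'I_n) : coordn j x = x 0 j.
Proof. by rewrite /coordn valK. Qed.

Lemma coordn_out x i : (n <= i)%N -> coordn i x = 0.
Proof. by move=> ni; rewrite /coordn insubF // ltnNge ni. Qed.

Lemma coordn_is_linear i : linear (coordn i).
Proof.
by move=> a x y; rewrite /coordn; case: insubP => [j _ _|_]; rewrite ?mxE // scaler0 addr0.
Qed.

Lemma coordn_continuous i : continuous (coordn i).
Proof.
rewrite /coordn; case: insubP => [j _ _|_]; last exact: cst_continuous.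
exact: coord_continuous.
Qed.

Lemma coordn_diff i x : differentiable (coordn i) x /\ 'd (coordn i) x = coordn i :> (_ -> _).
Proof.
pose L : {linear 'rV[R]_n -> R} :=
  HB.pack (coordn i) (GRing.isLinear.Build _ _ _ _ _ (coordn_is_linear i)).
have cL : continuous L by exact: coordn_continuous.
have -> : coordn i = L by [].
by split; [exact: linear_differentiable | rewrite diff_lin].
Qed.

Lemma sum_coordn v i (r : R) :
  \sum_(j < n) v 0 j * (if i == val j then r else 0) = coordn i v * r.
Proof.
rewrite /coordn; case: insubP => [j _ <-|/negbTE ni].
  rewrite (bigD1 j) //= eqxx big1 ?addr0 // => k kj.
  by rewrite eq_sym (inj_eq val_inj) (negbTE kj) mulr0.
rewrite mul0r big1 // => j _; case: eqP => [ji|_]; last by rewrite mulr0.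
by move: ni; rewrite ji ltn_ord.
Qed.

Lemma sum_supported1 v (F : nat -> R) a : (forall i : 'I_n, val i != a -> F i = 0) ->
  \sum_(i < n) v 0 i * F i = coordn a v * F a.
Proof.
move=> F0; rewrite -sum_coordn; apply: eq_bigr => i _.
by case: eqP => [-> //|/eqP ia]; rewrite F0 // eq_sym.
Qed.

Lemma sum_supported2 v (F : nat -> R) a b : a != b ->
  (forall i : 'I_n, val i != a -> val i != b -> F i = 0) ->
  \sum_(i < n) v 0 i * F i = coordn a v * F a + coordn b v * F b.
Proof.
move=> ab F0; rewrite -!sum_coordn -big_split; apply: eq_bigr => i _ /=.
rewrite -mulrDr; congr (_ * _).
have [<-|ia] := eqVneq a (val i); first by rewrite eq_sym (negbTE ab) addr0.
have [<-|ib] := eqVneq b (val i); first by rewrite add0r.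
by rewrite addr0 F0 // eq_sym.
Qed.

End Coordinates.

Inductive tpoly (R : Type) :=
  | TConst of R | TSin of nat | TCos of nat
  | TAdd of tpoly R & tpoly R | TMul of tpoly R & tpoly R.
Arguments TSin {R}. Arguments TCos {R}.

Section TrigPoly.
Variables (R : realType) (n : nat).
Implicit Types (x v : 'rV[R]_n) (e : tpoly R).

Fixpoint teval e x : R :=
  match e with
  | TConst r => r
  | TSin i => sin (coordn i x)
  | TCos i => cos (coordn i x)
  | TAdd a b => teval a x + teval b x
  | TMul a b => teval a x * teval b x
  end.

Fixpoint tderiv (j : nat) e : tpoly R :=
  match e with
  | TConst _ => TConst 0
  | TSin i => if i == j then TCos i else TConst 0
  | TCos i => if i == j then TMul (TConst (-1)) (TSin i) else TConst 0
  | TAdd a b => TAdd (tderiv j a) (tderiv j b)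
  | TMul a b => TAdd (TMul a (tderiv j b)) (TMul (tderiv j a) b)
  end.

Definition tdir v e x : R := \sum_(j < n) v 0 j * teval (tderiv j e) x.

Lemma tdir_const v r x : tdir v (TConst r) x = 0.
Proof. by rewrite /tdir big1 // => j _; rewrite mulr0. Qed.

Lemma tdir_sin v i x : tdir v (TSin i) x = coordn i v * cos (coordn i x).
Proof. by rewrite /tdir -sum_coordn; apply: eq_bigr => j _ /=; case: eqP. Qed.

Lemma tdir_cos v i x : tdir v (TCos i) x = coordn i v * - sin (coordn i x).
Proof.
by rewrite /tdir -sum_coordn; apply: eq_bigr => j _ /=; case: eqP; rewrite //= mulN1r.
Qed.

Lemma tdir_add v a b x : tdir v (TAdd a b) x = tdir v a x + tdir v b x.
Proof. by rewrite /tdir -big_split; apply: eq_bigr => j _; rewrite mulrDr. Qed.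

Lemma tdir_mul v a b x :
  tdir v (TMul a b) x = teval a x * tdir v b x + teval b x * tdir v a x.
Proof. by rewrite /tdir !big_distrr -big_split; apply: eq_bigr => j _ /=; ring. Qed.

Definition tdirE := (tdir_const, tdir_sin, tdir_cos, tdir_add, tdir_mul).

Lemma diff_sin (y h : R) : 'd (@sin R) y h = h * cos y.
Proof.
rewrite diff1E; last exact/derivable1_diffP/derivable_sin.
by rewrite derive1E derive_val.
Qed.

Lemma diff_cos (y h : R) : 'd (@cos R) y h = h * - sin y.
Proof.
rewrite diff1E; last exact/derivable1_diffP/derivable_cos.
by rewrite derive1E derive_val.
Qed.

Lemma teval_diff e x :
  differentiable (teval e) x /\ forall v, 'd (teval e) x v = tdir v e x.
Proof.
elim: e => [r|i|i|a [da Ha] b [db Hb]|a [da Ha] b [db Hb]].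
- have -> : teval (TConst r) = cst r by [].
  by split=> [|v]; [exact: differentiable_cst | rewrite diff_cst tdirE].
- have -> : teval (TSin i) = sin \o coordn i by [].
  have [dc Hc] := coordn_diff i x.
  have ds : differentiable (@sin R) (coordn i x) by exact/derivable1_diffP/derivable_sin.
  by split=> [|v]; [exact: differentiable_comp | rewrite diff_comp //= diff_sin Hc tdirE].
- have -> : teval (TCos i) = cos \o coordn i by [].
  have [dc Hc] := coordn_diff i x.
  have ds : differentiable (@cos R) (coordn i x) by exact/derivable1_diffP/derivable_cos.
  by split=> [|v]; [exact: differentiable_comp | rewrite diff_comp //= diff_cos Hc tdirE].
- have -> : teval (TAdd a b) = teval a + teval b by [].
  by split=> [|v]; [exact: differentiableD | rewrite diffD //= Ha Hb tdirE].
- have -> : teval (TMul a b) = teval a * teval b by [].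
  split=> [|v]; first exact: differentiableM.
  rewrite diffM //.
  change (teval a x * 'd (teval b) x v + teval b x * 'd (teval a) x v = tdir v (TMul a b) x).
  by rewrite Ha Hb tdirE.
Qed.

End TrigPoly.

Arguments teval {R n} !e x.

Section TrigRow.
Variables (R : realType) (n : nat).

Definition trow m (E : nat -> tpoly R) (x : 'rV[R]_n) : 'rV[R]_m :=
  \row_(k < m) teval (E k) x.

Lemma trow_differentiable m E x : differentiable (trow m E) x.
Proof.
have -> : trow m E = \sum_(k < m) (fun y => teval (E k) y *: (delta_mx 0 k : 'rV[R]_m)).
  rewrite fct_sumE; apply/funext => y; rewrite [LHS]row_sum_delta.
  by apply: eq_bigr => k _; rewrite mxE.
apply: differentiable_sum => k; apply: differentiableZl.
by have [] := teval_diff (E k) x.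
Qed.

Lemma diff_trow m E x v : 'd (trow m E) x v = \row_(k < m) tdir v (E k) x.
Proof.
rewrite -deriveE; last exact: trow_differentiable.
rewrite derive_mx; last exact/diff_derivable/trow_differentiable.
apply/rowP => k; rewrite !mxE.
have -> : (fun y => trow m E y 0 k) = teval (E k) by apply/funext => y; rewrite mxE.
by have [dE tE] := teval_diff (E k) x; rewrite deriveE // tE.
Qed.

Lemma derive_trow m E x (i : 'I_n) :
  derive (trow m E) x (delta_mx 0 i) = trow m (fun k => tderiv i (E k)) x.
Proof.
rewrite deriveE ?diff_trow; last exact: trow_differentiable.
apply/rowP => k; rewrite !mxE /tdir (bigD1 i) //= big1 ?addr0.
  by rewrite mxE !eqxx mul1r.
by move=> j /negPf ji; rewrite mxE ji andbF mul0r.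
Qed.

Lemma trow_smooth m E : smooth (trow m E).
Proof.
move=> k; elim: k E => [|k IH] E /=.
  by move=> x; apply/differentiable_continuous/trow_differentiable.
split=> [x|i]; first exact: trow_differentiable.
rewrite (_ : (fun x => _) = trow m (fun k => tderiv i (E k))) //.
by apply/funext => x; rewrite derive_trow.
Qed.

End TrigRow.

Section DeckGroup.
Variables (R : realType) (n : nat).
Implicit Types (x : 'rV[R]_n) (e : tpoly R).

Lemma coordn_Ktrans i j x :
  coordn j (Ktrans i x) = coordn j x + (if j == val i then pi *+ 2 else 0).
Proof.
rewrite /coordn /Ktrans; case: insubP => [k _ <-|/negbTE jn]; last first.
  by case: eqP => [ji|]; [move: jn; rewrite ji ltn_ord | rewrite addr0].
by rewrite !mxE (inj_eq val_inj) mulr_natl.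
Qed.

Lemma teval_Ktrans i e x : teval e (Ktrans i x) = teval e x.
Proof.
elim: e => [r|j|j|a IHa b IHb|a IHa b IHb] /=; rewrite ?IHa ?IHb //;
  by rewrite coordn_Ktrans; case: eqP; rewrite ?addr0 ?sinD2pi ?cosD2pi.
Qed.

Lemma coordn_Ksigma j x : (j < n)%N ->
  coordn j (Ksigma x) = if j == n.-1 then coordn j x + pi else - coordn j x.
Proof. by move=> jn; rewrite /coordn insubT /Ksigma mxE. Qed.

Lemma sin_coordn_Ksigma j x : sin (coordn j (Ksigma x)) = - sin (coordn j x).
Proof.
case: (ltnP j n) => [jn|nj]; last by rewrite !coordn_out // sin0 oppr0.
by rewrite coordn_Ksigma //; case: eqP; rewrite ?sinDpi ?sinN.
Qed.

Lemma cos_coordn_Ksigma j x : (j < n.-1)%N -> cos (coordn j (Ksigma x)) = cos (coordn j x).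
Proof.
move=> jn; rewrite coordn_Ksigma ?ltn_eqF ?cosN //.
exact: leq_trans jn (leq_pred n).
Qed.

Lemma cos_last_Ksigma x : (0 < n)%N ->
  cos (coordn n.-1 (Ksigma x)) = - cos (coordn n.-1 x).
Proof. by move=> n0; rewrite coordn_Ksigma ?eqxx ?cosDpi // prednK. Qed.

End DeckGroup.

(** * An immersion of the torus *)

Lemma rot_eq0 (R : comRingType) (C S a b : R) : C ^+ 2 + S ^+ 2 = 1 ->
  C * a - S * b = 0 -> S * a + C * b = 0 -> a = 0 /\ b = 0.
Proof.
move=> CS e1 e2.
have ea : a * (C ^+ 2 + S ^+ 2) = C * (C * a - S * b) + S * (S * a + C * b) by ring.
have eb : b * (C ^+ 2 + S ^+ 2) = C * (S * a + C * b) - S * (C * a - S * b) by ring.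
by rewrite CS mulr1 e1 e2 !mulr0 addr0 in ea; rewrite CS mulr1 e1 e2 !mulr0 subr0 in eb.
Qed.

Lemma norm_affine_le (R : realDomainType) (c d m g B : R) : 0 <= c ->
  `|d| <= 1 -> `|m| <= 1 -> `|g| <= B -> `|c * d + g * m| <= c + B.
Proof.
move=> c0 d1 m1 gB; apply: le_trans (ler_normD _ _) _.
rewrite !normrM (ger0_norm c0); apply: lerD; first by rewrite ler_piMr.
by rewrite -[B]mulr1; apply: ler_pM.
Qed.

Lemma norm_mul_le (R : realDomainType) (a b B : R) : `|a| <= 1 -> `|b| <= B -> `|a * b| <= B.
Proof. by move=> a1 bB; rewrite normrM -[B]mul1r ler_pM. Qed.

(* Regularity of the tube [(12 B + 1) (s, s c) + a (s^2 - c^2, c)], [|a| <= B],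
   around the figure eight, where [s = sin t], [c = cos t]: the hypotheses say
   that its derivative kills a tangent vector with [t]-component [vp] along
   which [a] has derivative [al]. *)
Lemma eight_tube_regular (R : realFieldType) (B a vp al s c : R) :
  s ^+ 2 + c ^+ 2 = 1 -> `|a| <= B ->
  (12 * B + 1) * vp * c + a * vp * (4 * s * c) + (s ^+ 2 - c ^+ 2) * al = 0 ->
  (12 * B + 1) * vp * (c ^+ 2 - s ^+ 2) - a * vp * s + c * al = 0 ->
  vp = 0 /\ al = 0.
Proof.
move=> sc /[dup] aB; rewrite ler_norml => /andP[aB1 aB2] e0 e1.
set K := 12 * B + 1.
set Q := c ^+ 2 + (c ^+ 2 - s ^+ 2) ^+ 2.
set M := s * (3 * c ^+ 2 + s ^+ 2).
have s2 : s ^+ 2 = 1 - c ^+ 2 by rewrite -sc; ring.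
have c2_ge0 : 0 <= c ^+ 2 := sqr_ge0 c.
have c2_le1 : c ^+ 2 <= 1 by rewrite -sc lerDr sqr_ge0.
have s1 : `|s| <= 1.
  by rewrite -(expr_le1 (n := 2)) // real_normK ?num_real // s2; lra.
have Q_ge : 7/16 <= Q.
  have -> : Q = (2 * c ^+ 2 - 3/4) ^+ 2 + 7/16 by rewrite /Q s2; field.
  by rewrite lerDr sqr_ge0.
have M_le : `|M| <= 3.
  rewrite /M normrM -[3]mul1r; apply: ler_pM => //.
  by rewrite ger0_norm s2; lra.
have key : vp * (K * Q + a * M) = 0.
  have -> : vp * (K * Q + a * M) =
      c * (K * vp * c + a * vp * (4 * s * c) + (s ^+ 2 - c ^+ 2) * al)
      + (c ^+ 2 - s ^+ 2) * (K * vp * (c ^+ 2 - s ^+ 2) - a * vp * s + c * al).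
    by rewrite /Q /M; ring.
  by rewrite e0 e1; ring.
have pos : 0 < K * Q + a * M.
  move: M_le; rewrite ler_norml => /andP[M1 M2].
  have p1 : 0 <= (B + a) * (3 + M) by apply: mulr_ge0; lra.
  have p2 : 0 <= (B - a) * (3 - M) by apply: mulr_ge0; lra.
  have p3 : 0 <= K * (Q - 7/16) by apply: mulr_ge0; rewrite /K; lra.
  rewrite /K in p3 *; lra.
have vp0 : vp = 0 by move/eqP: key; rewrite mulf_eq0 (gt_eqF pos) orbF => /eqP.
split=> //; move: e0 e1; rewrite vp0 !(mulr0, mul0r, add0r, subr0, oppr0) => e0 e1.
have : al * Q = 0.
  have -> : al * Q = c * (c * al) - (c ^+ 2 - s ^+ 2) * ((s ^+ 2 - c ^+ 2) * al).
    by rewrite /Q; ring.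
  by rewrite e0 e1 !mulr0 subr0.
have Q0 : 0 < Q by lra.
by move/eqP; rewrite mulf_eq0 (gt_eqF Q0) orbF => /eqP.
Qed.

Inductive profile := Circle | Eight.

Section TorusImmersion.
Variable R : realType.
Implicit Types (pr : profile) (p k : nat).

Definition profile_scale pr (b : R) : R := if pr is Eight then 12 * b + 1 else b + 1.

Fixpoint torus_bound pr p : R :=
  if p is p'.+1 then profile_scale pr (torus_bound pr p') + torus_bound pr p' else 0.

(* The profile curve, (cos t, sin t) or (sin t, sin t cos t) with [t = x_p],
   and a normal field along it. *)
Definition curve1 pr p : tpoly R := if pr is Eight then TSin p else TCos p.
Definition curve2 pr p : tpoly R := if pr is Eight then TMul (TSin p) (TCos p) else TSin p.
Definition normal1 pr p : tpoly R :=
  if pr is Eight then TAdd (TMul (TSin p) (TSin p)) (TMul (TConst (-1)) (TMul (TCos p) (TCos p)))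
  else TCos p.
Definition normal2 pr p : tpoly R := if pr is Eight then TCos p else TSin p.

(* An immersion of the [p]-torus into [R^(p+1)], built by induction: the
   first component of the immersion of the [p]-torus is used as the normal
   coordinate of a tube around a scaled copy of the profile curve. *)
Fixpoint torus_imm pr p k : tpoly R :=
  match p, k with
  | 0, _ => TConst 0
  | p'.+1, 0 => TAdd (TMul (TConst (profile_scale pr (torus_bound pr p'))) (curve1 pr p'))
                     (TMul (torus_imm pr p' 0) (normal1 pr p'))
  | p'.+1, 1 => TAdd (TMul (TConst (profile_scale pr (torus_bound pr p'))) (curve2 pr p'))
                     (TMul (torus_imm pr p' 0) (normal2 pr p'))
  | p'.+1, k'.+2 => torus_imm pr p' k'.+1
  end.

Lemma profile_scale_gt0 pr (b : R) : 0 <= b -> 0 < profile_scale pr b.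
Proof. by case: pr => /= b0; lra. Qed.

Lemma torus_bound_ge0 pr p : 0 <= torus_bound pr p.
Proof. by elim: p => //= p IH; rewrite addr_ge0 // ltW // profile_scale_gt0. Qed.

Section Bounds.
Variables (n : nat) (x : 'rV[R]_n).

Lemma sqr_sin_sub_cos (t : R) : `|sin t * sin t + -1 * (cos t * cos t)| <= 1.
Proof.
have := cos2Dsin2 t; have := sqr_ge0 (sin t); have := sqr_ge0 (cos t).
by rewrite ler_norml !expr2 => *; apply/andP; split; lra.
Qed.

Lemma curve_norm_le1 pr p :
  `|teval (curve1 pr p) x| <= 1 /\ `|teval (curve2 pr p) x| <= 1.
Proof.
case: pr => /=; rewrite ?normrM ?sin_max ?cos_max //.
by split=> //; rewrite mulr_ile1 ?sin_max ?cos_max.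
Qed.

Lemma normal_norm_le1 pr p :
  `|teval (normal1 pr p) x| <= 1 /\ `|teval (normal2 pr p) x| <= 1.
Proof. by case: pr => /=; rewrite ?sqr_sin_sub_cos ?sin_max ?cos_max. Qed.

Lemma torus_imm_bound pr p k : `|teval (torus_imm pr p k) x| <= torus_bound pr p.
Proof.
elim: p k => [|p IH] k; first by case: k => [|[|k]]; rewrite /= normr0.
have c0 := profile_scale_gt0 pr (torus_bound_ge0 pr p).
have [C1 C2] := curve_norm_le1 pr p; have [N1 N2] := normal_norm_le1 pr p.
case: k => [|[|k]]; last first.
  change (`|teval (torus_imm pr p k.+1) x| <= torus_bound pr p.+1).
  by rewrite (le_trans (IH _)) // lerDr ltW.
- exact: (norm_affine_le (ltW c0) C2 N2 (IH 0%N)).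
- exact: (norm_affine_le (ltW c0) C1 N1 (IH 0%N)).
Qed.

End Bounds.

Lemma torus_tube_regular pr p n (x v : 'rV[R]_n) :
  tdir v (torus_imm pr p.+1 0) x = 0 -> tdir v (torus_imm pr p.+1 1) x = 0 ->
  coordn p v = 0 /\ tdir v (torus_imm pr p 0) x = 0.
Proof.
set t := coordn p x.
have := torus_imm_bound x pr p 0; have := torus_bound_ge0 pr p.
case: pr => /= B0 gB E0 E1; rewrite !tdirE /= -/t in E0 E1.
- set a := teval _ x in gB E0 E1; set vp := coordn p v in E0 E1 *.
  have [al0 /eqP] : tdir v (torus_imm Circle p 0) x = 0 /\
                    (torus_bound Circle p + 1 + a) * vp = 0.
    apply: (rot_eq0 (cos2Dsin2 t)).
      by rewrite -[X in _ = X]E0; ring.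
    by rewrite -[X in _ = X]E1; ring.
  rewrite mulf_eq0 => /orP[|/eqP //]; move: gB; rewrite ler_norml; lra.
- apply: (eight_tube_regular (s := sin t) (c := cos t) _ gB).
  - by rewrite addrC cos2Dsin2.
  - by rewrite -[X in _ = X]E0; ring.
  - by rewrite -[X in _ = X]E1; ring.
Qed.

Lemma torus_imm_regular pr p n (x v : 'rV[R]_n) :
  (forall k, (k <= p)%N -> tdir v (torus_imm pr p k) x = 0) ->
  forall j, (j < p)%N -> coordn j v = 0.
Proof.
elim: p => [//|p IH] H j.
have [vp0 g0] := torus_tube_regular (H 0%N isT) (H 1%N isT).
rewrite ltnS leq_eqVlt => /orP[/eqP -> // | jp].
by apply: IH jp => -[//|k kp]; exact: (H k.+2).
Qed.

Definition torus_sign pr k : R := if pr is Circle then (if k is 0 then 1 else -1) else -1.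

Lemma torus_imm_Ksigma pr p k n (x : 'rV[R]_n) : (p <= n.-1)%N ->
  teval (torus_imm pr p k) (Ksigma x) = torus_sign pr k * teval (torus_imm pr p k) x.
Proof.
elim: p k => [|p IH] k pn; first by rewrite /= mulr0.
have cs := cos_coordn_Ksigma x pn; have ss := sin_coordn_Ksigma p x.
case: k => [|[|k]] /=; rewrite IH ?(ltnW pn) //; clear IH.
all: by case: pr => /=; rewrite ?cs ?ss; ring.
Qed.

End TorusImmersion.

Arguments torus_bound {R}. Arguments torus_imm {R}.

(** * An immersion of K_n into R^(n+1) *)

Section KImmersion.
Variables (R : realType) (n : nat).
Implicit Types (x v : 'rV[R]_n) (k : nat).

Definition Kprofile : profile := if odd n then Circle else Eight.

Definition Ktorus k : tpoly R := torus_imm Kprofile n.-1 k.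

(* The components [k >= odd n] of the torus immersion are rotated by the
   angle [x_(n-1)] in pairs [(k, k.+1)], [k - odd n] even. *)
Definition rot_comp k : tpoly R :=
  if (k < odd n)%N then Ktorus k
  else if ~~ odd (k - odd n) then
    TAdd (TMul (TCos n.-1) (Ktorus k)) (TMul (TConst (-1)) (TMul (TSin n.-1) (Ktorus k.+1)))
  else TAdd (TMul (TSin n.-1) (Ktorus k.-1)) (TMul (TCos n.-1) (Ktorus k)).

Definition Kimm_radius : R := 2 * torus_bound Kprofile n.-1 + 1.

(* [C^2 - S^2] and [2 S C] are the cosine and sine of [2 x_(n-1)]. *)
Definition Kimm_comp k : tpoly R :=
  match k with
  | 0 => TMul (TAdd (TConst Kimm_radius) (rot_comp 0))
              (TAdd (TMul (TCos n.-1) (TCos n.-1))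
                    (TMul (TConst (-1)) (TMul (TSin n.-1) (TSin n.-1))))
  | 1 => TMul (TAdd (TConst Kimm_radius) (rot_comp 0))
              (TMul (TConst 2) (TMul (TSin n.-1) (TCos n.-1)))
  | k'.+2 => rot_comp k'.+1
  end.

Definition Kimm : 'rV[R]_n -> 'rV[R]_n.+1 := trow n.+1 Kimm_comp.

Lemma Kpair_first_lt k : (0 < n)%N -> (odd n <= k)%N -> ~~ odd (k - odd n) ->
  (k <= n.-1)%N -> (k < n.-1)%N.
Proof.
case: n => [//|m] _ /= ok ev km; rewrite ltn_neqAle km andbT.
apply: contraNneq ev => km'; rewrite -km' oddB ?oddb ?addbN ?addbb //.
by move: ok; rewrite km'.
Qed.

Lemma Kimm_Ktrans i x : Kimm (Ktrans i x) = Kimm x.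
Proof. by apply/rowP => k; rewrite !mxE teval_Ktrans. Qed.

Lemma Ktorus_Ksigma k x :
  teval (Ktorus k) (Ksigma x) = (if (k < odd n)%N then 1 else -1) * teval (Ktorus k) x.
Proof.
rewrite torus_imm_Ksigma //; congr (_ * _).
by rewrite /Kprofile; case: (odd n); case: k.
Qed.

Lemma rot_comp_Ksigma k x : (0 < n)%N -> teval (rot_comp k) (Ksigma x) = teval (rot_comp k) x.
Proof.
move=> n0; have cs := cos_last_Ksigma x n0; have ss := sin_coordn_Ksigma n.-1 x.
rewrite /rot_comp; case: ltnP => ok /=; first by rewrite Ktorus_Ksigma ok mul1r.
case: ifP => ev /=; rewrite !Ktorus_Ksigma !ltnNge ok ?(leqW ok) /= cs ss; first ring.
have k_gt : (0 < k - odd n)%N by move: ev; case: (k - odd n)%N.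
have -> : (odd n <= k.-1)%N by lia.
by rewrite /=; ring.
Qed.

Lemma Kimm_Ksigma x : (0 < n)%N -> Kimm (Ksigma x) = Kimm x.
Proof.
move=> n0; have cs := cos_last_Ksigma x n0; have ss := sin_coordn_Ksigma n.-1 x.
apply/rowP => -[[|[|k]] kn]; rewrite !mxE /= rot_comp_Ksigma // ?cs ?ss //; ring.
Qed.

Lemma rot_comp0_bound x : `|teval (rot_comp 0) x| <= 2 * torus_bound Kprofile n.-1.
Proof.
have B0 := torus_bound_ge0 R Kprofile n.-1.
have g0 := torus_imm_bound x Kprofile n.-1 0; have g1 := torus_imm_bound x Kprofile n.-1 1.
rewrite /rot_comp; case: (odd n) => /=; first by rewrite -/(Ktorus 0); lra.
rewrite mulN1r (le_trans (ler_normB _ _)) // -[2]/(1 + 1) mulrDl mul1r.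
by apply: lerD; apply: norm_mul_le; rewrite ?cos_max ?sin_max.
Qed.

Lemma Kimm_radial_regular x v : (0 < n)%N ->
  tdir v (Kimm_comp 0) x = 0 -> tdir v (Kimm_comp 1) x = 0 ->
  coordn n.-1 v = 0 /\ tdir v (rot_comp 0) x = 0.
Proof.
move=> n0 E0 E1.
set C := cos (coordn n.-1 x); set S := sin (coordn n.-1 x).
set U := Kimm_radius + teval (rot_comp 0) x.
have U0 : 0 < U.
  have := rot_comp0_bound x; rewrite /U /Kimm_radius ler_norml; lra.
rewrite /= !tdirE /= -/C -/S -/U in E0 E1.
have [be0 /eqP] : tdir v (rot_comp 0) x = 0 /\ 2 * U * coordn n.-1 v = 0.
  apply: (rot_eq0 (C := C ^+ 2 - S ^+ 2) (S := 2 * S * C)).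
  - have -> : (C ^+ 2 - S ^+ 2) ^+ 2 + (2 * S * C) ^+ 2 = (C ^+ 2 + S ^+ 2) ^+ 2 by ring.
    by rewrite cos2Dsin2 expr1n.
  - by rewrite -[X in _ = X]E0; ring.
  - by rewrite -[X in _ = X]E1; ring.
by rewrite !mulf_eq0 pnatr_eq0 (gt_eqF U0) /= => /eqP.
Qed.

Section Pairs.
Variables (x v : 'rV[R]_n) (k : nat).
Hypotheses (vt0 : coordn n.-1 v = 0) (ok : (odd n <= k)%N).

Lemma tdir_rot_comp_first : ~~ odd (k - odd n) ->
  tdir v (rot_comp k) x = cos (coordn n.-1 x) * tdir v (Ktorus k) x
                          - sin (coordn n.-1 x) * tdir v (Ktorus k.+1) x.
Proof. by move=> ev; rewrite /rot_comp ltnNge ok ev /= !tdirE vt0 /=; ring. Qed.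

Lemma tdir_rot_comp_second : odd (k - odd n) ->
  tdir v (rot_comp k) x = sin (coordn n.-1 x) * tdir v (Ktorus k.-1) x
                          + cos (coordn n.-1 x) * tdir v (Ktorus k) x.
Proof. by move=> od; rewrite /rot_comp ltnNge ok od /= !tdirE vt0 /=; ring. Qed.

End Pairs.

Lemma Ktorus_regular x v : (0 < n)%N -> coordn n.-1 v = 0 ->
  (forall k, (k <= n.-1)%N -> tdir v (rot_comp k) x = 0) ->
  forall k, (k <= n.-1)%N -> tdir v (Ktorus k) x = 0.
Proof.
move=> n0 vt0 rotE k kn.
have pairE k' : (odd n <= k')%N -> ~~ odd (k' - odd n) -> (k' <= n.-1)%N ->
    tdir v (Ktorus k') x = 0 /\ tdir v (Ktorus k'.+1) x = 0.
  move=> ok ev kn'; have kn'' := Kpair_first_lt n0 ok ev kn'.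
  apply: (rot_eq0 (cos2Dsin2 (coordn n.-1 x))).
    by rewrite -tdir_rot_comp_first // rotE.
  rewrite -[k' in Ktorus k']/(k'.+1.-1) -tdir_rot_comp_second ?rotE ?(leqW ok) //.
  by rewrite subSn // /= ev.
case: (ltnP k (odd n)) => [ko|ok].
  by move: (rotE k kn); rewrite /rot_comp ko.
case ev: (odd (k - odd n)); last by have [] := pairE k ok (negbT ev) kn.
have k_gt : (0 < k - odd n)%N by move: ev; case: (k - odd n)%N.
have ok' : (odd n <= k.-1)%N by lia.
have ev' : ~~ odd (k.-1 - odd n).
  have -> : (k.-1 - odd n = (k - odd n).-1)%N by lia.
  by move: ev; rewrite -(prednK k_gt).
have [_] := pairE k.-1 ok' ev' (leq_trans (leq_pred k) kn).
by rewrite prednK //; lia.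
Qed.

Lemma Kimm_regular x v : (0 < n)%N -> 'd Kimm x v = 0 -> v = 0.
Proof.
move=> n0; rewrite /Kimm diff_trow => /rowP dE.
have E k : (k <= n)%N -> tdir v (Kimm_comp k) x = 0.
  by move=> kn; have := dE (Ordinal (kn : (k < n.+1)%N)); rewrite !mxE.
have [vt0 rot0] := Kimm_radial_regular n0 (E 0%N isT) (E 1%N n0).
have rotE k : (k <= n.-1)%N -> tdir v (rot_comp k) x = 0.
  by case: k => [//|k] kn; apply: (E k.+2); lia.
have coordE := torus_imm_regular (Ktorus_regular n0 vt0 rotE).
apply/rowP => j; rewrite mxE -coordn_ord.
case: (ltnP j n.-1) => [/coordE //| jn].
by have -> : (j : nat) = n.-1 by have := ltn_ord j; lia.
Qed.

End KImmersion.

(** * Independent vector fields *)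

Section VectorFields.
Variables (R : realType) (n : nat).
Implicit Types (x : 'rV[R]_n) (i k : nat).

Definition Kspan : nat := if odd n then n else n.-1.

(* Entry [k] of field [i]: field [Kspan.-1] is [e_(n-1)], fields [2q] and
   [2q+1] below it are [e_(2q)] and [e_(2q+1)] rotated by the angle [x_(n-1)]. *)
Definition field_entry i k : tpoly R :=
  if i == Kspan.-1 then (if k == n.-1 then TConst 1 else TConst 0)
  else if (i < Kspan.-1)%N && (i./2 == k./2) then
    match odd i, odd k with
    | false, false | true, true => TCos n.-1
    | false, true => TSin n.-1
    | true, false => TMul (TConst (-1)) (TSin n.-1)
    end
  else TConst 0.

Definition Kfield i : 'rV[R]_n -> 'rV[R]_n := trow n (field_entry i).

Lemma Kspan_pred_even : ~~ odd Kspan.-1.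
Proof.
rewrite /Kspan; case: n => [|m] //=; case om: (odd m) => /=; last by rewrite om.
by case: m om.
Qed.

Lemma Kspan_pred_le : (Kspan.-1 <= n.-1)%N.
Proof. by rewrite /Kspan; case: (odd n) => //; exact: leq_pred. Qed.

Lemma Kspan_gt0 : (0 < n)%N -> (0 < Kspan)%N.
Proof. by rewrite /Kspan; case: n => [|[|m]] //= _; case: (odd m). Qed.

Lemma block_lt i k : (i < Kspan.-1)%N -> i./2 = k./2 -> (k < Kspan.-1)%N.
Proof.
move=> ik ik2.
have es : Kspan.-1 = (Kspan.-1./2).*2.
  by rewrite -[LHS]odd_double_half (negbTE Kspan_pred_even).
have q_lt : (k./2 < Kspan.-1./2)%N by rewrite -ik2 ltn_half_double -es.
rewrite -(odd_double_half k) es; move: q_lt (odd k : nat) (leq_b1 (odd k)).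
move: (k./2) (Kspan.-1./2) => a b; rewrite -!addnn; lia.
Qed.

Lemma field_entry_Ksigma i k x : (0 < n)%N ->
  teval (field_entry i k) (Ksigma x) =
  if k == n.-1 then teval (field_entry i k) x else - teval (field_entry i k) x.
Proof.
move=> n0; have cs := cos_last_Ksigma x n0; have ss := sin_coordn_Ksigma n.-1 x.
rewrite /field_entry; case: eqP => _; first by case: eqP => _ /=; rewrite ?oppr0.
case: ifP => [/andP[ik /eqP ik2]|_]; last by case: eqP => _ /=; rewrite ?oppr0.
rewrite ltn_eqF; last exact: leq_trans (block_lt ik ik2) Kspan_pred_le.
by case: (odd i); case: (odd k) => /=; rewrite ?cs ?ss; ring.
Qed.

Lemma Kfield_vector_field i : (0 < n)%N -> Kvector_field (Kfield i).
Proof.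
move=> n0; split; first exact: (trow_smooth _ _ _ 0).
split=> x; first by move=> ?; apply/rowP => k; rewrite !mxE teval_Ktrans.
by apply/rowP => k; rewrite !mxE field_entry_Ksigma.
Qed.

Lemma field_entry_last i x : teval (field_entry i n.-1) x = (i == Kspan.-1)%:R.
Proof.
rewrite /field_entry; case: eqP => [_|_]; first by rewrite eqxx.
case: ifP => // /andP[ik /eqP ik2].
by have := leq_trans (block_lt ik ik2) Kspan_pred_le; rewrite ltnn.
Qed.

Lemma field_entry_off i k x : (k < Kspan.-1)%N -> i./2 != k./2 ->
  teval (field_entry i k) x = 0.
Proof.
move=> kK ik; rewrite /field_entry (negbTE ik) andbF.
by case: eqP => // _; rewrite ltn_eqF // (leq_trans kK Kspan_pred_le).
Qed.

Section Independence.
Variables (x : 'rV[R]_n) (w : 'rV[R]_Kspan).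
Hypothesis w_col : forall k, (k < n)%N ->
  \sum_(i < Kspan) w 0 i * teval (field_entry i k) x = 0.

Lemma Kfield_comb_last : (0 < n)%N -> coordn Kspan.-1 w = 0.
Proof.
move=> n0; have n1 : (n.-1 < n)%N by rewrite ltn_predL.
have := w_col n1.
rewrite (sum_supported1 (F := fun j => teval (field_entry j n.-1) x) _ (a := Kspan.-1)).
  by rewrite field_entry_last eqxx mulr1.
by move=> j jK; rewrite field_entry_last (negbTE jK).
Qed.

Lemma Kfield_comb_block q : (q.*2 < Kspan.-1)%N ->
  coordn q.*2 w = 0 /\ coordn q.*2.+1 w = 0.
Proof.
set a := q.*2; set b := a.+1 => aK.
have a2 : a./2 = q by rewrite doubleK.
have b2 : b./2 = q by rewrite /b /a -[_.+1./2]/(uphalf _) uphalf_double.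
have bK : (b < Kspan.-1)%N by apply: block_lt aK _; rewrite a2 b2.
have an : (a < n)%N by rewrite (leq_trans aK) // (leq_trans Kspan_pred_le) ?leq_pred.
have bn : (b < n)%N by rewrite (leq_trans bK) // (leq_trans Kspan_pred_le) ?leq_pred.
have ab : a != b by rewrite neq_ltn ltnSn.
have off k : k./2 = q -> (k < Kspan.-1)%N ->
    forall j : 'I_Kspan, val j != a -> val j != b -> teval (field_entry j k) x = 0.
  move=> k2 kK j ja jb; apply: field_entry_off kK _; rewrite k2.
  apply/eqP => j2; move: ja jb; rewrite -[val j](odd_double_half j) j2 -/a /b.
  by case: (odd j); rewrite ?add1n ?add0n eqxx.
have ca := w_col an; have cb := w_col bn.
rewrite (sum_supported2 (F := fun j => teval (field_entry j a) x) _ ab (off a a2 aK)) in ca.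
rewrite (sum_supported2 (F := fun j => teval (field_entry j b) x) _ ab (off b b2 bK)) in cb.
rewrite /field_entry !(ltn_eqF aK) !(ltn_eqF bK) aK bK a2 b2 eqxx /= odd_double /= in ca cb.
apply: (rot_eq0 (cos2Dsin2 (coordn n.-1 x))).
  by rewrite -[X in _ = X]ca; ring.
by rewrite -[X in _ = X]cb; ring.
Qed.

End Independence.

Lemma Kfields_free x : (0 < n)%N ->
  row_free (\matrix_(i < Kspan, j < n) Kfield i x 0 j).
Proof.
move=> n0; apply: inj_row_free => w wM0.
have w_col k : (k < n)%N -> \sum_(i < Kspan) w 0 i * teval (field_entry i k) x = 0.
  move=> kn; move/rowP: wM0 => /(_ (Ordinal kn)); rewrite !mxE => wk.
  by rewrite -[X in _ = X]wk; apply: eq_bigr => i _; rewrite !mxE.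
apply/rowP => i; rewrite mxE -coordn_ord.
have [->|iK1] := eqVneq (i : nat) Kspan.-1; first exact: (Kfield_comb_last w_col n0).
have iK : (i < Kspan.-1)%N.
  by rewrite ltn_neqAle iK1 -ltnS prednK ?ltn_ord ?Kspan_gt0.
have qK : ((i./2).*2 < Kspan.-1)%N by have := odd_double_half i; lia.
have [wa wb] := Kfield_comb_block w_col qK.
by rewrite -[i : nat]odd_double_half; case: (odd i).
Qed.

End VectorFields.

(** * No frame of n fields for even n *)

Lemma det_continuous (R : realType) (T : topologicalType) (m : nat) (M : T -> 'M[R]_m) :
  (forall i j, continuous (fun x => M x i j)) -> continuous (fun x => \det (M x)).
Proof.
move=> Mc; rewrite /determinant; apply: continuous_big => [|s _ x].
  exact: add_continuous.
apply: cvgM; first exact: cvg_cst.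
by apply: continuous_big => [|i _]; [exact: mul_continuous | exact: Mc].
Qed.

Section SpanUpperBound.
Variables (R : realType) (n : nat).

Lemma prod_Kdsigma_sign : (0 < n)%N -> ~~ odd n ->
  \prod_(j < n) (if is_last j then 1 else -1 : R) = -1.
Proof.
case: n => [//|m] _ ev; rewrite big_ord_recr /= /is_last /= eqxx mulr1.
rewrite (eq_bigr (fun _ => -1)) => [|j _]; last by rewrite ltn_eqF.
by rewrite prodr_const card_ord -signr_odd; move: ev => /= /negbNE ->.
Qed.

Lemma no_Kframe : (0 < n)%N -> ~~ odd n -> ~ K_has_indep_fields R n n.
Proof.
move=> n0 ev [V [Vfield Vfree]].
pose D x := \det (\matrix_(i < n, j < n) V i x 0 j).
have D_neq0 x : D x != 0.
  by have := Vfree x; rewrite row_free_unit unitmxE unitfE.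
have D_cont : continuous D.
  apply: det_continuous => i j.
  rewrite (_ : (fun x => _) = (fun M : 'rV[R]_n => M 0 j) \o V i); last first.
    by apply/funext => x; rewrite mxE.
  by move=> x; apply: continuous_comp; [exact: (Vfield i).1 | exact: coord_continuous].
have D_sigma x : D (Ksigma x) = - D x.
  rewrite /D; have -> : \matrix_(i < n, j < n) V i (Ksigma x) 0 j =
      (\matrix_(i < n, j < n) V i x 0 j) *m diag_mx (\row_j (if is_last j then 1 else -1)).
    apply/matrixP => i j; rewrite mul_mx_diag !mxE (Vfield i).2.2 !mxE.
    by case: ifP; rewrite ?mulr1 ?mulrN1.
  rewrite det_mulmx det_diag (eq_bigr (fun j => if is_last j then 1 else -1)).
    by rewrite prod_Kdsigma_sign // mulrN1.
  by move=> j _; rewrite mxE.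
pose f t := D (t *: Ksigma 0).
have f_cont : continuous f.
  by move=> t; apply: continuous_comp; [exact: scalel_continuous | exact: D_cont].
have f01 : Num.min (f 0) (f 1) <= 0 <= Num.max (f 0) (f 1).
  rewrite /f scale0r scale1r D_sigma.
  by rewrite /Num.min /Num.max; case: ifP => h; apply/andP; split; lra.
have [c _ fc0] := @IVT R f 0 1 0 ler01 (continuous_subspaceT f_cont) f01.
by have := D_neq0 (c *: Ksigma 0); rewrite -/(f c) fc0 eqxx.
Qed.

Lemma K_indep_fields_le k : (0 < n)%N -> K_has_indep_fields R n k -> (k <= Kspan n)%N.
Proof.
move=> n0 [V [Vfield Vfree]].
have kn : (k <= n)%N by have /eqP <- := Vfree 0; exact: rank_leq_col.
rewrite /Kspan; case: ifP => // ev; rewrite -ltnS prednK //.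
rewrite ltn_neqAle kn andbT; apply/eqP => kn'; subst k.
by apply: no_Kframe => //; [rewrite ev | exists V].
Qed.

End SpanUpperBound.

Theorem mainTheorem10 (R : realType) (n : nat) : (1 <= n)%N ->
  K_span_is R n (if odd n then n else n.-1) /\ K_immerses_in R n n.+1.
Proof.
move=> n0; split; first split.
- exists (fun i : 'I_(Kspan n) => @Kfield R n i).
  by split=> [i|x]; [exact: Kfield_vector_field | exact: Kfields_free].
- by move=> k; apply: K_indep_fields_le.
- exists (@Kimm R n); split; first exact: trow_smooth.
  split; first exact: Kimm_Ktrans.
  by split=> [x|x v]; [exact: Kimm_Ksigma | exact: Kimm_regular].
Qed.
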